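(* For $\beta,\gamma\in\mathbb{C}\setminus\{0,-1,-2\}$, the modules $\mathbb{M}_\beta$ and $\mathbb{M}_\gamma$ are isomorphic $B_{5,10}$-modules if and only if $(1+\beta)^2=(1+\gamma)^2$, i.e. if and only if $\beta=\gamma$ or $\beta+\gamma=-2$.
   Context: Let $Z=\mathbb{C}[[t]]$. Let $\Gamma_{10}$ be the quiver with vertices $0,1,\dots,9$ (indices taken mod $10$) on a cycle and arrows $x_i\colon i-1\to i$, $y_i\colon i\to i-1$ for $i=1,\dots,10$. Let $B_{5,10}$ be the completed path algebra of $\Gamma_{10}$ modulo the closed ideal generated by $xy=yx$ and $x^5=y^5$ at every vertex. For $b=(b_1,\dots,b_{10})\in Z^{10}$ with $\sum_i b_i=0$, the $B_{5,10}$-module $\mathbb{M}(b)$ has $V_i=Z\oplus Z$ at every vertex, and for odd $j$: $x_j=\begin{pmatrix} t& b_j\\ 0&1\end{pmatrix}$, $y_j=\begin{pmatrix} 1&-b_j\\0&t\end{pmatrix}$; for even $j$: $x_j=\begin{pmatrix}1&b_j\\0&t\end{pmatrix}$, $y_j=\begin{pmatrix}t&-b_j\\0&1\end{pmatrix}$. An isomorphism $\mathbb{M}(b)\to\mathbb{M}(c)$ is a family of invertible $Z$-linear maps $\varphi_i\colon Z^2\to Z^2$ commuting with all $x_i$ and $y_i$. For odd $i$ write $B_i=b_i+b_{i+1}$ (indices mod $10$). For $\beta\in\mathbb{C}\setminus\{0,-1,-2\}$, $\mathbb{M}_\beta$ denotes $\mathbb{M}(b)$ for a tuple $b$ with $B_1=\beta$,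 $B_3=1$, $B_5=-1$, $B_7=-\beta-1$, $B_9=1$ (e.g. $b_i=B_i$ for odd $i$ and $b_i=0$ for even $i$). *)

(* C := R[i] for R : realType (any realType is the real line,
   so R[i] is the field of complex numbers).  Z = C[[t]] is modelled as the ring
   of formal power series  nat -> C  with the Cauchy product; equality of power
   series is coefficientwise. *)
From HB Require Import structures.
From mathcomp Require Import all_boot all_order all_algebra.
From mathcomp Require Import reals complex.
Set Implicit Arguments. Unset Strict Implicit. Unset Printing Implicit Defensive.
Import Order.TTheory GRing.Theory Num.Theory.
Local Open Scope ring_scope.

Section PowerSeries.
Variable K : comNzRingType.

Definition ps := nat -> K.
Definition ps_eq (f g : ps) : Prop := forall n, f n = g n.
Definition psC (c : K) : ps := fun n => if n is 0%N then c else 0.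
Definition psT : ps := fun n => if n == 1%N then 1 else 0.
Definition psadd (f g : ps) : ps := fun n => f n + g n.
Definition psopp (f : ps) : ps := fun n => - f n.
Definition psmul (f g : ps) : ps := fun n => \sum_(i < n.+1) f i * g (n - i)%N.

(* 2x2 matrices over Z = K[[t]], acting on column vectors Z^2 *)
Record mx2 := Mx2 { m11 : ps; m12 : ps; m21 : ps; m22 : ps }.
Definition mx2mul (A B : mx2) : mx2 :=
  Mx2 (psadd (psmul (m11 A) (m11 B)) (psmul (m12 A) (m21 B)))
      (psadd (psmul (m11 A) (m12 B)) (psmul (m12 A) (m22 B)))
      (psadd (psmul (m21 A) (m11 B)) (psmul (m22 A) (m21 B)))
      (psadd (psmul (m21 A) (m12 B)) (psmul (m22 A) (m22 B))).
Definition mx2_eq (A B : mx2) : Prop :=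
  [/\ ps_eq (m11 A) (m11 B), ps_eq (m12 A) (m12 B),
      ps_eq (m21 A) (m21 B) & ps_eq (m22 A) (m22 B)].
Definition mx2_one : mx2 := Mx2 (psC 1) (psC 0) (psC 0) (psC 1).
Definition mx2_invertible (A : mx2) : Prop :=
  exists B, mx2_eq (mx2mul A B) mx2_one /\ mx2_eq (mx2mul B A) mx2_one.

(* Indexing convention (0-based): j : 'I_10 stands for the paper's index j+1.
   Vertex j : 'I_10 is the paper's vertex j.  The arrow x_{j+1} goes from
   vertex j to vertex j+1 (mod 10), y_{j+1} goes back; b j is b_{j+1}.
   The paper's index j+1 is odd iff j is even. *)
Definition xmat (b : 'I_10 -> ps) (j : 'I_10) : mx2 :=
  if ~~ odd j then Mx2 psT (b j) (psC 0) (psC 1)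
  else Mx2 (psC 1) (b j) (psC 0) psT.
Definition ymat (b : 'I_10 -> ps) (j : 'I_10) : mx2 :=
  if ~~ odd j then Mx2 (psC 1) (psopp (b j)) (psC 0) psT
  else Mx2 psT (psopp (b j)) (psC 0) (psC 1).

Definition sum_zero (b : 'I_10 -> ps) : Prop :=
  forall n, \sum_(i < 10) b i n = 0.

Definition M_iso (b c : 'I_10 -> ps) : Prop :=
  exists phi : 'I_10 -> mx2,
    (forall i, mx2_invertible (phi i)) /\
    (forall j : 'I_10,
        mx2_eq (mx2mul (phi (ordS j)) (xmat b j)) (mx2mul (xmat c j) (phi j)) /\
        mx2_eq (mx2mul (phi j) (ymat b j)) (mx2mul (ymat c j) (phi (ordS j)))).

(* B_i = b_i + b_{i+1} for the paper's odd i *)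
Definition Bsum (b : 'I_10 -> ps) (k : nat) : ps :=
  psadd (b (inord k)) (b (inord k.+1)).

(* b is a tuple defining M_beta: B_1 = beta, B_3 = 1, B_5 = -1,
   B_7 = -beta-1, B_9 = 1 (paper's B_{2m+1} is Bsum b (2m)) *)
Definition is_Mbeta_tuple (beta : K) (b : 'I_10 -> ps) : Prop :=
  [/\ ps_eq (Bsum b 0) (psC beta), ps_eq (Bsum b 2) (psC 1),
      ps_eq (Bsum b 4) (psC (-1)), ps_eq (Bsum b 6) (psC (- beta - 1))
    & ps_eq (Bsum b 8) (psC 1)].

End PowerSeries.

(* Write phi for an isomorphism M(b) -> M(c) and, at the even vertex 2k,
   P_k, S_k for the constant terms of the diagonal entries of phi_{2k} and r_k
   for the t-coefficient of its lower-left entry.  Following the two arrows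
   2k -> 2k+1 -> 2k+2 and comparing coefficients of order 0 and 1 shows that
   the lower-left entry has no constant term, r_{k+1} = r_k = r, and
     P_{k+1} = P_k + C_k r,  S_{k+1} = S_k - B_k r,  C_k S_k - B_k P_k = r C_k B_k,
   where B_k = b_{2k+1} + b_{2k+2} and C_k are the (constant) paired sums of b
   and c.  For M_beta -> M_gamma the relations at k = 0, 1, 4 give
   r (beta + gamma + 2) = 0, and r = 0 forces beta = gamma since P_0 S_0 != 0.
   Conversely, any 5-periodic data (r, P_k, S_k) with these relations and
   P_k S_k != 0 is realised by explicit invertible matrices (Deven at even
   vertices, Dodd at odd ones); two choices of data realise beta = gamma and
   beta + gamma = -2. *)

From Pilot Require Import Defs.
From HB Require Import structures.
From mathcomp Require Import all_boot all_order all_algebra.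
From mathcomp Require Import reals complex.
From Stdlib Require Import FunctionalExtensionality Ring.
Set Implicit Arguments. Unset Strict Implicit. Unset Printing Implicit Defensive.
Import Order.TTheory GRing.Theory Num.Theory.
Local Open Scope ring_scope.

Section PowerSeriesRing.
Variable K : comNzRingType.
Local Notation ps := (ps K).

Lemma ps_ext (f g : ps) : ps_eq f g -> f = g.
Proof. exact: functional_extensionality. Qed.

Lemma eq_ps (f g : ps) : f = g -> ps_eq f g.
Proof. by move=> ->. Qed.

Definition trunc (n : nat) (f : ps) : {poly K} := \poly_(i < n.+1) f i.

Lemma coef_psmul (f g : ps) n j :
  (j <= n)%N -> psmul f g j = (trunc n f * trunc n g)`_j.
Proof.
move=> le_jn; rewrite coefM; apply: eq_bigr => i _.
have le_in : (i <= n)%N by rewrite (leq_trans _ le_jn) // -ltnS.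
by rewrite !coef_poly ltnS le_in ltnS (leq_trans (leq_subr _ _)).
Qed.

Lemma psmulC (f g : ps) : psmul f g = psmul g f.
Proof. by apply: ps_ext => n; rewrite !(coef_psmul _ _ (leqnn n)) mulrC. Qed.

Lemma psmulA (f g h : ps) : psmul f (psmul g h) = psmul (psmul f g) h.
Proof.
apply: ps_ext => n; transitivity ((trunc n f * (trunc n g * trunc n h))`_n).
  rewrite coefM; apply: eq_bigr => i _.
  by rewrite (coef_psmul _ _ (leq_subr i n)) coef_poly ltn_ord.
rewrite mulrA coefM; apply: eq_bigr => i _.
by rewrite -(coef_psmul _ _ (leq_ord i)) coef_poly ltnS leq_subr.
Qed.

Lemma psmulDl (f g h : ps) : psmul (psadd f g) h = psadd (psmul f h) (psmul g h).
Proof.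
by apply: ps_ext => n; rewrite /psmul /psadd -big_split; apply: eq_bigr => i _; rewrite mulrDl.
Qed.

Lemma psCmul (a : K) (f : ps) n : psmul (psC a) f n = a * f n.
Proof. by rewrite /psmul big_ord_recl subn0 big1 ?addr0 // => i _; rewrite mul0r. Qed.

Definition pssub (f g : ps) : ps := psadd f (psopp g).

Lemma ps_ring :
  ring_theory (psC 0) (psC 1) (@psadd K) (@psmul K) pssub (@psopp K) (@eq ps).
Proof.
split=> [f|f g|f g h|f|f g|f g h|f g h|//|f]; apply: ps_ext => n //.
- by rewrite /psadd /psC; case: n => [|n]; rewrite add0r.
- by rewrite /psadd addrC.
- by rewrite /psadd addrA.
- by rewrite psCmul mul1r.
- by rewrite psmulC.
- by rewrite psmulA.
- by rewrite psmulDl.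
- by rewrite /pssub /psadd /psopp /psC subrr; case: n.
Qed.

Lemma psC_add (a c : K) : psC (a + c) = psadd (psC a) (psC c).
Proof. by apply: ps_ext => -[|n]; rewrite /psadd /psC ?addr0. Qed.

Lemma psC_mul (a c : K) : psC (a * c) = psmul (psC a) (psC c).
Proof. by apply: ps_ext => n; rewrite psCmul /psC; case: n => [|n]; rewrite ?mulr0. Qed.

Lemma psC_opp (a : K) : psC (- a) = psopp (psC a).
Proof. by apply: ps_ext => -[|n]; rewrite /psopp /psC ?oppr0. Qed.

Lemma psmul_coef0 (f g : ps) : psmul f g 0 = f 0%N * g 0%N.
Proof. by rewrite /psmul big_ord_recl big_ord0 addr0. Qed.

Lemma psmul_coef1 (f g : ps) : psmul f g 1 = f 0%N * g 1%N + f 1%N * g 0%N.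
Proof. by rewrite /psmul !big_ord_recl big_ord0 addr0. Qed.

End PowerSeriesRing.

Section Intertwiners.
Variable K : comNzRingType.
Local Notation ps := (ps K).
Local Notation psT := (@psT K).
Add Ring psRing : (ps_ring K).

(* The two shapes of arrows of M(b): at a paper-odd index i (0-based j even)
   x_i = [t e; 0 1], y_i = [1 -e; 0 t], at a paper-even index the roles of
   1 and t are exchanged; e is the entry b_i. *)
Definition xo (e : ps) : mx2 K := Mx2 psT e (psC 0) (psC 1).
Definition yo (e : ps) : mx2 K := Mx2 (psC 1) (psopp e) (psC 0) psT.
Definition xe (e : ps) : mx2 K := Mx2 (psC 1) e (psC 0) psT.
Definition ye (e : ps) : mx2 K := Mx2 psT (psopp e) (psC 0) (psC 1).

(* Components of an isomorphism M(b) -> M(c): at an even vertex a lower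
   triangular matrix with lower-left entry r t, at the following odd vertex
   the matrix it determines through the arrows with entries e = c_i, f = b_i. *)
Definition Deven (r P S : K) : mx2 K :=
  Mx2 (psC P) (psC 0) (psmul (psC r) psT) (psC S).
Definition Dodd (r P S : K) (e f : ps) : mx2 K :=
  Mx2 (psadd (psC P) (psmul (psC r) e))
      (pssub (pssub (psmul e (psC S)) (psmul f (psC P))) (psmul (psC r) (psmul e f)))
      (psC r) (pssub (psC S) (psmul (psC r) f)).

Lemma Dodd_intertwines (r P S : K) (e f : ps) :
  mx2_eq (mx2mul (Dodd r P S e f) (xo f)) (mx2mul (xo e) (Deven r P S)) /\
  mx2_eq (mx2mul (Deven r P S) (yo f)) (mx2mul (yo e) (Dodd r P S e f)).
Proof. by split; split; apply: eq_ps; rewrite /=; ring. Qed.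

Lemma Deven_intertwines (r P S C B : K) (e f e1 f1 : ps) :
  psadd e e1 = psC C -> psadd f f1 = psC B -> C * S - B * P - r * C * B = 0 ->
  mx2_eq (mx2mul (Deven r (P + r * C) (S - r * B)) (xe f1))
         (mx2mul (xe e1) (Dodd r P S e f)) /\
  mx2_eq (mx2mul (Dodd r P S e f) (ye f1))
         (mx2mul (ye e1) (Deven r (P + r * C) (S - r * B))).
Proof.
move=> sum_e sum_f constraint.
have -> : e1 = pssub (psC C) e by rewrite -sum_e; ring.
have -> : f1 = pssub (psC B) f by rewrite -sum_f; ring.
have constraint' : psmul (psC C) (psC S)
    = psadd (psmul (psC B) (psC P)) (psmul (psC r) (psmul (psC C) (psC B))).
  rewrite -!psC_mul -psC_add; congr psC.
  by apply/eqP; rewrite -subr_eq0 -constraint opprD addrA mulrA.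
rewrite /Deven psC_add psC_mul psC_add psC_opp psC_mul.
by split; split; apply: eq_ps; rewrite /=; ring [constraint'].
Qed.

End Intertwiners.

Section Invertibility.
Variable K : fieldType.
Add Ring psRing : (ps_ring K).

Lemma mx2_invertible_det (A : mx2 K) (d : K) : d != 0 ->
  pssub (psmul (m11 A) (m22 A)) (psmul (m12 A) (m21 A)) = psC d ->
  mx2_invertible A.
Proof.
case: A => a b c e /= d_neq0 detA.
have dinv : psmul (psC d^-1) (psC d) = psC 1 by rewrite -psC_mul mulVf.
have ae : psmul a e = psadd (psC d) (psmul b c) by rewrite -detA; ring.
exists (Mx2 (psmul (psC d^-1) e) (psmul (psC d^-1) (psopp b))
            (psmul (psC d^-1) (psopp c)) (psmul (psC d^-1) a)).
by split; split; apply: eq_ps; rewrite /=; ring [ae dinv].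
Qed.

Lemma Deven_invertible (r P S : K) : P * S != 0 -> mx2_invertible (Deven r P S).
Proof. by move=> PS_neq0; apply: (mx2_invertible_det PS_neq0); rewrite /= psC_mul; ring. Qed.

Lemma Dodd_invertible (r P S : K) (e f : ps K) :
  P * S != 0 -> mx2_invertible (Dodd r P S e f).
Proof. by move=> PS_neq0; apply: (mx2_invertible_det PS_neq0); rewrite /= psC_mul; ring. Qed.

End Invertibility.

From mathcomp Require Import ring.

Section ConstantTerms.
Variable K : fieldType.
Local Notation ps := (ps K).

Lemma pair_constraint (A A1 A2 : mx2 K) (e e1 f f1 : ps) :
  mx2_eq (mx2mul A1 (xo f)) (mx2mul (xo e) A) ->
  mx2_eq (mx2mul A2 (xe f1)) (mx2mul (xe e1) A1) ->
  [/\ m21 A 0%N = 0, m21 A2 1%N = m21 A 1%N,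
      m11 A2 0%N = m11 A 0%N + psadd e e1 0%N * m21 A 1%N,
      m22 A2 0%N = m22 A 0%N - psadd f f1 0%N * m21 A 1%N &
      psadd e e1 0%N * m22 A 0%N - psadd f f1 0%N * m11 A 0%N
        - psadd e e1 0%N * psadd f f1 0%N * m21 A 1%N = 0].
Proof.
case: A A1 A2 => [p q r s] [p1 q1 r1 s1] [p2 q2 r2 s2].
case=> h11 h12 h21 h22 [k11 k12 k21 k22].
move: (h11 1%N) (h12 0%N) (h21 0%N) (h21 1%N) (h22 0%N).
move: (k11 0%N) (k12 0%N) (k21 0%N) (k21 1%N) (k22 1%N).
rewrite /= /psadd !psmul_coef0 !psmul_coef1 /Defs.psT /psC /=.
rewrite !mulr0 !mul0r !mulr1 !mul1r !addr0 !add0r.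
move=> p2_0 q1_rel r2_0 r2_1 s2_rel p1_0 q1_0 r_0 r1_0 s1_0.
have r0 : r 0%N = 0 by rewrite -r_0.
rewrite r0 mulr0 addr0 in p1_0; rewrite r1_0 in p2_0 s1_0 r2_1.
have s1E : s1 0%N = s 0%N - r 1%N * f 0%N by rewrite -s1_0; ring.
have s2E : s2 0%N = s1 0%N - r 1%N * f1 0%N by rewrite -s2_rel r2_0 r2_1; ring.
have q1E : q1 0%N = e 0%N * s 0%N - p1 0%N * f 0%N by rewrite -q1_0; ring.
split=> //; first by rewrite p2_0 p1_0; ring.
  by rewrite s2E s1E; ring.
move/eqP: q1_rel; rewrite p2_0 q1E p1_0 s1E -subr_eq0 => /eqP q1_rel.
by rewrite -[RHS]oppr0 -q1_rel; ring.
Qed.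

Lemma invertible_det0 (A : mx2 K) : mx2_invertible A ->
  m11 A 0%N * m22 A 0%N - m12 A 0%N * m21 A 0%N != 0.
Proof.
case: A => a b c d [[a' b' c' d'] [[h11 h12 h21 h22] _]].
move: (h11 0%N) (h12 0%N) (h21 0%N) (h22 0%N).
rewrite /= /psadd !psmul_coef0 /psC /= => e11 e12 e21 e22.
have det_mul :
    (a 0%N * d 0%N - b 0%N * c 0%N) * (a' 0%N * d' 0%N - b' 0%N * c' 0%N) = 1.
  transitivity ((a 0%N * a' 0%N + b 0%N * c' 0%N) * (c 0%N * b' 0%N + d 0%N * d' 0%N)
    - (a 0%N * b' 0%N + b 0%N * d' 0%N) * (c 0%N * a' 0%N + d 0%N * c' 0%N)).
    by ring.
  by rewrite e11 e12 e21 e22; ring.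
by apply/eqP => det0; move: det_mul; rewrite det0 mul0r => /eqP; rewrite eq_sym oner_eq0.
Qed.

End ConstantTerms.

Definition vert (k : nat) : 'I_10 := inord k.*2.
Definition overt (k : nat) : 'I_10 := inord k.*2.+1.

Lemma vertE k : (k < 5)%N -> vert k = k.*2 :> nat.
Proof. by move=> lt_k5; rewrite /vert inordK // -(doubleS 4) ltn_double. Qed.

Lemma overtE k : (k < 5)%N -> overt k = k.*2.+1 :> nat.
Proof. by move=> lt_k5; rewrite /overt inordK // -(doubleS 4) ltn_Sdouble. Qed.

Lemma ordS_vert k : (k < 5)%N -> ordS (vert k) = overt k.
Proof.
move=> lt_k5; apply: val_inj; rewrite /= vertE // overtE // modn_small //.
by rewrite -(doubleS 4) ltn_Sdouble.
Qed.

Lemma ordS_overt k : (k < 5)%N -> ordS (overt k) = vert (k.+1 %% 5).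
Proof.
move=> lt_k5; apply: val_inj; rewrite /= overtE // vertE ?ltn_pmod //.
by case: k lt_k5 => [|[|[|[|[|k]]]]].
Qed.

Lemma ord10_cases (j : 'I_10) : exists2 k, (k < 5)%N & j = vert k \/ j = overt k.
Proof.
exists j./2; first by rewrite ltn_half_double.
have lt_half : (j./2 < 5)%N by rewrite ltn_half_double.
have := odd_double_half j.
case: (odd j) => /= j_eq; [right | left]; apply: val_inj => /=.
  by rewrite overtE // -{1}j_eq add1n.
by rewrite vertE // -{1}j_eq add0n.
Qed.

Section VertexArrows.
Variables (K : comNzRingType) (b : 'I_10 -> ps K).

Lemma xmat_vert k : (k < 5)%N -> xmat b (vert k) = xo (b (vert k)).
Proof. by move=> lt_k5; rewrite /xmat vertE // odd_double. Qed.

Lemma ymat_vert k : (k < 5)%N -> ymat b (vert k) = yo (b (vert k)).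
Proof. by move=> lt_k5; rewrite /ymat vertE // odd_double. Qed.

Lemma xmat_overt k : (k < 5)%N -> xmat b (overt k) = xe (b (overt k)).
Proof. by move=> lt_k5; rewrite /xmat overtE //= odd_double. Qed.

Lemma ymat_overt k : (k < 5)%N -> ymat b (overt k) = ye (b (overt k)).
Proof. by move=> lt_k5; rewrite /ymat overtE //= odd_double. Qed.

End VertexArrows.

Definition Bconst (K : nzRingType) (beta : K) (k : nat) : K :=
  match k with 0 => beta | 1 => 1 | 2 => -1 | 3 => - beta - 1 | _ => 1 end.

Lemma Mbeta_sums (K : comNzRingType) (beta : K) (b : 'I_10 -> ps K) :
  is_Mbeta_tuple beta b -> forall k, (k < 5)%N -> Bsum b k.*2 = psC (Bconst beta k).
Proof. by case=> B0 B1 B2 B3 B4 [|[|[|[|[|k]]]]] // _; apply: ps_ext. Qed.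

(* The relations obtained along the pairs of arrows starting at the vertices
   0, 2 and 8 (where B_3 = B_9 = 1) leave only the two possibilities. *)
Lemma cycle_relations_force (K : fieldType) (beta gamma r P0 S0 P1 S1 P4 S4 : K) :
  gamma * S0 - beta * P0 - gamma * beta * r = 0 ->
  P1 = P0 + gamma * r -> S1 = S0 - beta * r -> S1 - P1 - r = 0 ->
  P0 = P4 + r -> S0 = S4 - r -> S4 - P4 - r = 0 ->
  P0 * S0 != 0 -> beta = gamma \/ beta + gamma = -2.
Proof.
move=> rel0 P1E S1E rel1 P40 S40 rel4 PS_neq0.
have SP0 : S0 - P0 + r = 0 by rewrite P40 S40 -rel4; ring.
have : (beta + gamma + 2) * r = 0.
  transitivity ((S0 - P0 + r) - (S1 - P1 - r)); first by rewrite P1E S1E; ring.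
  by rewrite SP0 rel1 subr0.
move/eqP; rewrite mulf_eq0 => /orP[|/eqP r0].
  by rewrite addr_eq0 => /eqP; right.
have S0E : S0 = P0 by apply/eqP; rewrite -subr_eq0 -SP0 r0 addr0.
have P0_neq0 : P0 != 0 by move: PS_neq0; rewrite mulf_eq0 negb_or => /andP[].
move: rel0; rewrite r0 S0E mulr0 subr0 -mulrBl => /eqP.
by rewrite mulf_eq0 (negbTE P0_neq0) orbF subr_eq0 => /eqP ->; left.
Qed.

Section Necessity.
Variable K : fieldType.
Variables (b c : 'I_10 -> ps K) (phi : 'I_10 -> mx2 K).
Hypothesis phi_x : forall j : 'I_10,
  mx2_eq (mx2mul (phi (ordS j)) (xmat b j)) (mx2mul (xmat c j) (phi j)).

Let P k := m11 (phi (vert k)) 0%N.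
Let S k := m22 (phi (vert k)) 0%N.
Let r k := m21 (phi (vert k)) 1%N.

Lemma pair_step k : (k < 5)%N ->
  [/\ m21 (phi (vert k)) 0%N = 0, r (k.+1 %% 5) = r k,
      P (k.+1 %% 5) = P k + Bsum c k.*2 0%N * r k,
      S (k.+1 %% 5) = S k - Bsum b k.*2 0%N * r k &
      Bsum c k.*2 0%N * S k - Bsum b k.*2 0%N * P k
        - Bsum c k.*2 0%N * Bsum b k.*2 0%N * r k = 0].
Proof.
move=> lt_k5; have := phi_x (vert k); rewrite ordS_vert // !xmat_vert // => step_even.
have := phi_x (overt k); rewrite ordS_overt // !xmat_overt // => step_odd.
exact: pair_constraint step_even step_odd.
Qed.

Theorem iso_necessary (beta gamma : K) :
  mx2_invertible (phi (vert 0)) -> is_Mbeta_tuple beta b -> is_Mbeta_tuple gamma c ->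
  beta = gamma \/ beta + gamma = -2.
Proof.
move=> phi0_inv Mb Mc.
have [low0 r01 P01 S01 rel0] := pair_step (k := 0) isT.
have [_ _ _ _ rel1] := pair_step (k := 1) isT.
have [_ r40 P40 S40 rel4] := pair_step (k := 4) isT.
rewrite !(Mbeta_sums Mb) // !(Mbeta_sums Mc) //= in P01 S01 rel0 rel1 P40 S40 rel4.
rewrite !mul1r r01 in rel1; rewrite !mul1r -r40 in P40 S40 rel4.
have PS_neq0 : P 0 * S 0 != 0.
  by move: (invertible_det0 phi0_inv); rewrite low0 mulr0 subr0.
exact: cycle_relations_force rel0 P01 S01 rel1 P40 S40 rel4 PS_neq0.
Qed.

End Necessity.

Section Sufficiency.
Variable K : fieldType.
Variables (b c : 'I_10 -> ps K) (Cb Cc P S : nat -> K) (r : K).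
Hypothesis sums_b : forall k, (k < 5)%N -> Bsum b k.*2 = psC (Cb k).
Hypothesis sums_c : forall k, (k < 5)%N -> Bsum c k.*2 = psC (Cc k).
Hypothesis P_step : forall k, (k < 5)%N -> P (k.+1 %% 5) = P k + r * Cc k.
Hypothesis S_step : forall k, (k < 5)%N -> S (k.+1 %% 5) = S k - r * Cb k.
Hypothesis constraint : forall k, (k < 5)%N ->
  Cc k * S k - Cb k * P k - r * Cc k * Cb k = 0.
Hypothesis PS_neq0 : forall k, (k < 5)%N -> P k * S k != 0.

Definition iso_family (j : 'I_10) : mx2 K :=
  if odd j then Dodd r (P j./2) (S j./2) (c (inord j.-1)) (b (inord j.-1))
  else Deven r (P j./2) (S j./2).

Lemma iso_family_vert k : (k < 5)%N -> iso_family (vert k) = Deven r (P k) (S k).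
Proof. by move=> lt_k5; rewrite /iso_family vertE // odd_double doubleK. Qed.

Lemma iso_family_overt k : (k < 5)%N ->
  iso_family (overt k) = Dodd r (P k) (S k) (c (vert k)) (b (vert k)).
Proof. by move=> lt_k5; rewrite /iso_family overtE //= odd_double /= uphalf_double. Qed.

Theorem iso_of_data : M_iso b c.
Proof.
exists iso_family; split=> [j | j].
  have lt_half : (j./2 < 5)%N by rewrite ltn_half_double.
  rewrite /iso_family; case: ifP => _;
    [apply: Dodd_invertible | apply: Deven_invertible]; exact: PS_neq0.
have [k lt_k5 [-> | ->]] := ord10_cases j.
  rewrite ordS_vert // iso_family_overt // iso_family_vert //.
  rewrite xmat_vert // ymat_vert // xmat_vert // ymat_vert //.
  exact: Dodd_intertwines.
rewrite ordS_overt // iso_family_overt // iso_family_vert ?ltn_pmod //.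
rewrite xmat_overt // ymat_overt // xmat_overt // ymat_overt // P_step // S_step //.
exact: Deven_intertwines (sums_c lt_k5) (sums_b lt_k5) (constraint lt_k5).
Qed.

End Sufficiency.

Lemma Mbeta_iso_same (K : fieldType) (beta : K) (b c : 'I_10 -> ps K) :
  is_Mbeta_tuple beta b -> is_Mbeta_tuple beta c -> M_iso b c.
Proof.
move=> Mb Mc; apply: (@iso_of_data K b c (Bconst beta) (Bconst beta) (fun=> 1) (fun=> 1) 0)
  => k lt_k5.
- exact: Mbeta_sums Mb k lt_k5.
- exact: Mbeta_sums Mc k lt_k5.
- by rewrite mul0r addr0.
- by rewrite mul0r subr0.
- by rewrite !mulr1 subrr !mul0r subr0.
- by rewrite mulr1 oner_neq0.
Qed.

Lemma Mbeta_iso_flip (K : fieldType) (beta : K) (b c : 'I_10 -> ps K) :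
  beta != 0 -> beta != -2 ->
  is_Mbeta_tuple beta b -> is_Mbeta_tuple (-2 - beta) c -> M_iso b c.
Proof.
move=> beta_neq0 beta_neq_2 Mb Mc.
pose P k := match k with 0 => 2 + beta | 1 => -2 - beta | 2 => - beta
                       | 3 => -2 - beta | _ => beta end.
pose S k := match k with 0 => beta | 1 => - beta | 2 => -2 - beta
                       | 3 => - beta | _ => 2 + beta end.
have PS_neq0 : beta * (beta + 2) != 0 by rewrite mulf_neq0 // addr_eq0.
apply: (@iso_of_data K b c (Bconst beta) (Bconst (-2 - beta)) P S 2) => k lt_k5.
- exact: Mbeta_sums Mb k lt_k5.
- exact: Mbeta_sums Mc k lt_k5.
- by case: k lt_k5 => [|[|[|[|[|k]]]]] //= _; ring.
- by case: k lt_k5 => [|[|[|[|[|k]]]]] //= _; ring.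
- by case: k lt_k5 => [|[|[|[|[|k]]]]] //= _; ring.
- have -> : P k * S k = beta * (beta + 2) by case: k lt_k5 => [|[|[|[|[|k]]]]] //= _; ring.
  exact: PS_neq0.
Qed.

Lemma sqr_shift_eq (K : idomainType) (x y : K) :
  (1 + x) ^+ 2 = (1 + y) ^+ 2 <-> (x = y \/ x + y = -2).
Proof.
have sqr_diff : (1 + x) ^+ 2 - (1 + y) ^+ 2 = (x - y) * (x + y + 2) by ring.
split=> [sq_eq | [-> // | sum_eq]].
  move/eqP: sq_eq; rewrite -subr_eq0 sqr_diff mulf_eq0 subr_eq0 addr_eq0.
  by case/orP=> /eqP; [left | right].
by apply/eqP; rewrite -subr_eq0 sqr_diff sum_eq addNr mulr0.
Qed.

Theorem mainTheorem8 (R : realType) (beta gamma : R[i])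
  (b c : 'I_10 -> ps R[i]) :
  beta != 0 -> beta != -1 -> beta != -2 ->
  gamma != 0 -> gamma != -1 -> gamma != -2 ->
  sum_zero b -> is_Mbeta_tuple beta b ->
  sum_zero c -> is_Mbeta_tuple gamma c ->
  (M_iso b c <-> (1 + beta) ^+ 2 = (1 + gamma) ^+ 2) /\
  (M_iso b c <-> (beta = gamma \/ beta + gamma = -2)).
Proof.
move=> beta_neq0 _ beta_neq_2 _ _ _ _ Mb _ Mc.
have iso_iff : M_iso b c <-> (beta = gamma \/ beta + gamma = -2).
  split=> [[phi [phi_inv phi_comm]] | [beta_eq | sum_eq]].
  - by apply: (iso_necessary (phi := phi)) Mb Mc => // j; exact: (phi_comm j).1.
  - by rewrite beta_eq in Mb; exact: Mbeta_iso_same Mb Mc.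
  - have gammaE : gamma = -2 - beta by rewrite -sum_eq addrC addKr.
    by rewrite gammaE in Mc; exact: Mbeta_iso_flip Mb Mc.
split; last exact: iso_iff.
exact: iff_trans iso_iff (iff_sym (sqr_shift_eq beta gamma)).
Qed.
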